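(* Let $M$ be a finite set of integers in $[-t,t]$ for an integer $t\ge1$, and let $K\ge2$ be an integer. For each $m\in M$ set $m'=\frac{m}{t\sqrt K}$ and define $X=\{\ell_m=(-\sqrt{1-m'^2},m',0)^\top: m\in M\}\cup\{r_m=(\sqrt{1-m'^2},0,m')^\top: m\in M\}\subseteq S^2$, and let $k=2K$. If $M$ has a $K$-subset with zero sum, then $X$ has a $k$-subset $T$ with centroid $z_T=0$. Otherwise, every $k$-subset $T\subseteq X$ satisfies $\|z_T\|\ge\frac{1}{2tK^{3/2}}$.
   Context: The centroid of a finite set $T\subseteq\mathbb{R}^3$ is $z_T=\frac{1}{|T|}\sum_{u\in T}u$; $\|\cdot\|$ is the Euclidean norm and $S^2$ the unit sphere in $\mathbb{R}^3$. *)

From HB Require Import structures.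
From mathcomp Require Import all_boot all_order all_algebra.
From mathcomp Require Import finmap.
From mathcomp Require Import reals.
Set Implicit Arguments. Unset Strict Implicit. Unset Printing Implicit Defensive.
Import Order.TTheory GRing.Theory Num.Theory.
Local Open Scope ring_scope.
Local Open Scope fset_scope.

Section Defs.
Variable R : realType.

Definition vec3 (a b c : R) : 'rV[R]_3 := \row_(i < 3) [:: a; b; c]`_i.

Definition enorm (v : 'rV[R]_3) : R := Num.sqrt (\sum_(i < 3) v 0 i ^+ 2).

Definition centroid (T : {fset 'rV[R]_3}) : 'rV[R]_3 :=
  (#|` T|%:R)^-1 *: \sum_(u <- T) u.

Definition mprime (t K : nat) (m : int) : R := m%:~R / (t%:R * Num.sqrt K%:R).

Definition lpt (t K : nat) (m : int) : 'rV[R]_3 :=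
  vec3 (- Num.sqrt (1 - mprime t K m ^+ 2)) (mprime t K m) 0.

Definition rpt (t K : nat) (m : int) : 'rV[R]_3 :=
  vec3 (Num.sqrt (1 - mprime t K m ^+ 2)) 0 (mprime t K m).

Definition Xset (t K : nat) (M : {fset int}) : {fset 'rV[R]_3} :=
  [fset lpt t K m | m in M] `|` [fset rpt t K m | m in M].
End Defs.

(* Every T included in X is {l_m : m in A} u {r_m : m in B} with A, B
   included in M.  Summing T, the first coordinate is
   sum_B s_m - sum_A s_m with s_m = sqrt (1 - m'^2), the second is
   sum_A m' and the third sum_B m'.  Since m'^2 <= 1/K, every s_m lies in
   [K/(K+1), 1].  If |T| = 2K and |A| <> K, the larger of A and B has at
   least K+1 elements and the other at most K-1, so the first coordinate has
   absolute value at least K - (K-1) = 1.  If |A| = K, the second coordinate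
   is (sum_A m)/(t sqrt K), and sum_A m is a nonzero integer unless A is a
   zero-sum K-subset of M.  Dividing by |T| = 2K gives the bound.  Conversely,
   for a zero-sum K-subset S, taking both l_m and r_m for all m in S cancels
   the first coordinate and makes the other two vanish. *)

From HB Require Import structures.
From mathcomp Require Import all_boot all_order all_algebra.
From mathcomp Require Import finmap.
From mathcomp Require Import reals.
From mathcomp Require Import ring lra zify.
Import Order.TTheory GRing.Theory Num.Theory.
Local Open Scope ring_scope.
Local Open Scope fset_scope.

Lemma big_fsubset_imfsetU (I J : choiceType) (V : Type) (idx : V)
    (op : Monoid.com_law idx) (f g : I -> J) (M : {fset I}) (T : {fset J})
    (F : J -> V) :
  {in M &, injective f} -> {in M &, injective g} ->
  {in M &, forall a b, f a != g b} ->
  T `<=` [fset f m | m in M] `|` [fset g m | m in M] ->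
  \big[op/idx]_(x <- T) F x =
  op (\big[op/idx]_(m <- [fset m in M | f m \in T]) F (f m))
     (\big[op/idx]_(m <- [fset m in M | g m \in T]) F (g m)).
Proof.
move=> f_inj g_inj fg_neq /fsubsetP sub_T.
have sub_inj (h : I -> J) : {in M &, injective h} ->
    {in [fset m in M | h m \in T] &, injective h}.
  by move=> h_inj a b; rewrite !inE => /andP[aM _] /andP[bM _]; apply: h_inj.
rewrite (big_fsetID _ (mem [fset f m | m in M])) /=.
have -> : [fset x in T | x \in [fset f m | m in M]] =
          [fset f m | m in [fset m in M | f m \in T]].
  apply/fsetP => x; rewrite !inE /=; apply/andP/imfsetP => [[xT]|[m]].
    by case/imfsetP => m /= mM xE; exists m; rewrite // !inE /= mM -xE xT.
  by rewrite !inE /= => /andP[mM fmT] ->; rewrite fmT in_imfset.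
have -> : [fset x in T | x \notin [fset f m | m in M]] =
          [fset g m | m in [fset m in M | g m \in T]].
  apply/fsetP => x; rewrite !inE /=; apply/andP/imfsetP => [[xT xNf]|[m]].
    have := sub_T x xT; rewrite inE => /orP[] /imfsetP[m /= mM xE].
      by rewrite xE in_imfset in xNf.
    by exists m; rewrite // !inE /= mM -xE xT.
  rewrite !inE /= => /andP[mM gmT] ->; split => //.
  by apply/imfsetP => -[m' /= m'M /eqP]; apply/negP; rewrite eq_sym fg_neq.
by rewrite !big_imfset //=; apply: sub_inj.
Qed.

Section Euclid.
Context {R : realType}.

Lemma vec3_0 : vec3 0 0 0 = 0 :> 'rV[R]_3.
Proof. by apply/rowP => -[[|[|[|//]]] i]; rewrite /vec3 !mxE. Qed.

Lemma sum_vec3 (I : Type) (r : seq I) (a b c : I -> R) :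
  \sum_(i <- r) vec3 (a i) (b i) (c i) =
  vec3 (\sum_(i <- r) a i) (\sum_(i <- r) b i) (\sum_(i <- r) c i).
Proof.
apply/rowP => -[[|[|[|//]]] j]; rewrite summxE /vec3 mxE;
  by apply: eq_bigr => i _; rewrite mxE.
Qed.

Lemma enormZ (a : R) (v : 'rV[R]_3) : enorm (a *: v) = `|a| * enorm v.
Proof.
rewrite /enorm -sqrtr_sqr -sqrtrM ?sqr_ge0 // mulr_sumr.
by congr Num.sqrt; apply: eq_bigr => i _; rewrite mxE exprMn.
Qed.

Lemma normr_le_enorm (v : 'rV[R]_3) j : `|v 0 j| <= enorm v.
Proof.
rewrite /enorm -sqrtr_sqr ler_sqrt ?sumr_ge0 // => [|i _]; last exact: sqr_ge0.
by rewrite (bigD1 j) //= lerDl sumr_ge0 // => i _; apply: sqr_ge0.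
Qed.

End Euclid.

Section Construction.
Context {R : realType} {t K : nat}.
Hypotheses (t_ge1 : (1 <= t)%N) (K_ge2 : (2 <= K)%N).

Local Notation c := (t%:R * Num.sqrt K%:R : R).
Local Notation mp := (mprime R t K).
Local Notation lpt := (lpt R t K).
Local Notation rpt := (rpt R t K).

Definition mcos (m : int) : R := Num.sqrt (1 - mp m ^+ 2).

Let K_ge2R : 2 <= K%:R :> R.
Proof. by rewrite ler_nat. Qed.

Lemma scale_ge1 : 1 <= c.
Proof.
have K_ge1 : 1 <= K%:R :> R by have := K_ge2R; lra.
by rewrite mulr_ege1 ?ler1n // -[X in X <= _]sqrtr1 ler_sqrt ?ler0n.
Qed.

Lemma scale_gt0 : 0 < c.
Proof. exact: lt_le_trans ltr01 scale_ge1. Qed.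

Lemma mprime_inj : injective mp.
Proof.
move=> m1 m2; rewrite /mprime => /(congr1 ( *%R^~ c)).
by rewrite !divfK ?gt_eqF ?scale_gt0 // => /intr_inj.
Qed.

Lemma mprime_sum (A : seq int) :
  \sum_(m <- A) mp m = (\sum_(m <- A) m)%:~R / c.
Proof. by rewrite rmorph_sum mulr_suml. Qed.

Lemma mprime_sqr_le {m : int} : `|m| <= t%:Z -> mp m ^+ 2 <= K%:R^-1.
Proof.
move=> m_le; have t_gt0 : 0 < t%:R :> R by rewrite ltr0n.
have : `|m%:~R| <= t%:R :> R.
  by rewrite -intr_norm -[t%:R]/((t%:Z)%:~R : R) ler_int.
rewrite ler_norml => /andP[lo hi].
rewrite /mprime expr_div_n exprMn sqr_sqrtr ?ler0n // invfM mulrA.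
rewrite ler_piMl ?invr_ge0 ?ler0n // ler_pdivrMr ?exprn_gt0 // mul1r.
by nra.
Qed.

Lemma mcos_le1 m : mcos m <= 1.
Proof. by rewrite -sqrtr1 ler_sqrt // lerBlDr lerDl sqr_ge0. Qed.

Lemma mcos_ge {m : int} : `|m| <= t%:Z -> K%:R / (K%:R + 1) <= mcos m.
Proof.
move=> m_le; have K2 := K_ge2R.
have q_ge0 : 0 <= K%:R / (K%:R + 1) :> R by rewrite divr_ge0 //; lra.
have mp_le : 1 - K%:R^-1 <= 1 - mp m ^+ 2 by rewrite lerD2l lerN2 mprime_sqr_le.
have inv_le1 : K%:R^-1 <= 1 :> R by rewrite invf_le1; lra.
rewrite -(ger0_norm q_ge0) -sqrtr_sqr ler_sqrt; last first.
  by apply: le_trans mp_le; lra.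
apply: le_trans mp_le; rewrite -subr_ge0.
have -> : 1 - K%:R^-1 - (K%:R / (K%:R + 1)) ^+ 2 =
    (K%:R ^+ 2 - K%:R - 1) / (K%:R * (K%:R + 1) ^+ 2) :> R.
  by field; rewrite !gt_eqF //; lra.
by rewrite divr_ge0 ?mulr_ge0 ?sqr_ge0 //; nra.
Qed.

Lemma mcos_gt0 {m : int} : `|m| <= t%:Z -> 0 < mcos m.
Proof.
move=> m_le; apply: (lt_le_trans _ (mcos_ge m_le)).
by have := K_ge2R => K2; rewrite divr_gt0 //; lra.
Qed.

Lemma sum_mcos_le_card (A : {fset int}) : \sum_(m <- A) mcos m <= #|` A|%:R.
Proof.
by rewrite card_fset_sum1 natr_sum ler_sum // => m _; apply: mcos_le1.
Qed.

Lemma sum_mcos_ge {A : {fset int}} : {in A, forall m, `|m| <= t%:Z} ->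
  (K < #|` A|)%N -> K%:R <= \sum_(m <- A) mcos m.
Proof.
move=> A_bnd A_gt; have K2 := K_ge2R.
have q_ge0 : 0 <= K%:R / (K%:R + 1) :> R by rewrite divr_ge0 //; lra.
apply: le_trans (_ : (K%:R + 1) * (K%:R / (K%:R + 1)) <= _).
  by rewrite mulrC divfK // gt_eqF //; lra.
apply: le_trans (_ : #|` A|%:R * (K%:R / (K%:R + 1)) <= _).
  by rewrite ler_wpM2r // natr1 ler_nat.
rewrite card_fset_sum1 natr_sum mulr_suml big_seq [leRHS]big_seq.
by apply: ler_sum => m mA; rewrite mul1r mcos_ge // A_bnd.
Qed.

Lemma sum_mcos_gap {A B : {fset int}} : {in A, forall m, `|m| <= t%:Z} ->
  (#|` B| < K)%N -> (#|` A| + #|` B| = 2 * K)%N ->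
  1 <= \sum_(m <- A) mcos m - \sum_(m <- B) mcos m.
Proof.
move=> A_bnd B_lt AB_card.
have A_gt : (K < #|` A|)%N by lia.
have := sum_mcos_ge A_bnd A_gt; have := sum_mcos_le_card B.
have : (#|` B|%:R + 1 <= K%:R :> R)%R by rewrite natr1 ler_nat.
by lra.
Qed.

Lemma inv_scale_le1 : c^-1 <= 1.
Proof. by rewrite invf_le1 ?scale_gt0 ?scale_ge1. Qed.

Lemma inv_scale_le_norm_mprime_sum (A : seq int) :
  \sum_(m <- A) m != 0 -> c^-1 <= `|\sum_(m <- A) mp m|.
Proof.
move=> sum_neq0; rewrite mprime_sum normrM normfV (gtr0_norm scale_gt0).
rewrite ler_pMl ?invr_gt0 ?scale_gt0 //.
by rewrite -intr_norm ler1z -gtz0_ge1 normr_gt0.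
Qed.

Lemma lpt_inj : injective lpt.
Proof.
move=> m1 m2 /(congr1 (fun v : 'rV[R]_3 => v 0 1)).
by rewrite /lpt /vec3 !mxE => /mprime_inj.
Qed.

Lemma rpt_inj : injective rpt.
Proof.
move=> m1 m2 /(congr1 (fun v : 'rV[R]_3 => v 0 2%:R)).
by rewrite /rpt /vec3 !mxE => /mprime_inj.
Qed.

Lemma lpt_neq_rpt {m1 : int} m2 : `|m1| <= t%:Z -> lpt m1 != rpt m2.
Proof.
move=> m1_le; apply/eqP => /(congr1 (fun v : 'rV[R]_3 => v 0 0)).
rewrite /lpt /rpt /vec3 !mxE /= -/(mcos m1) -/(mcos m2).
have : 0 <= mcos m2 := sqrtr_ge0 _.
by have := mcos_gt0 m1_le; lra.
Qed.

Definition lidx (M : {fset int}) (T : {fset 'rV[R]_3}) :=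
  [fset m in M | lpt m \in T].
Definition ridx (M : {fset int}) (T : {fset 'rV[R]_3}) :=
  [fset m in M | rpt m \in T].

Lemma Xset_subset (S M : {fset int}) :
  S `<=` M -> Xset R t K S `<=` Xset R t K M.
Proof. by move=> /fsubsetP SM; apply: fsetUSS; apply: subset_imfset. Qed.

Lemma lidx_Xset M : lidx M (Xset R t K M) = M.
Proof.
apply/fsetP => m; rewrite !inE /=.
by case mM: (m \in M) => //=; rewrite in_imfset.
Qed.

Lemma ridx_Xset M : ridx M (Xset R t K M) = M.
Proof.
apply/fsetP => m; rewrite !inE /=.
by case mM: (m \in M) => //=; rewrite in_imfset ?orbT.
Qed.

Section SubsetOfX.
Context {M : {fset int}} {T : {fset 'rV[R]_3}}.
Hypotheses (M_bnd : {in M, forall m, `|m| <= t%:Z}) (T_X : T `<=` Xset R t K M).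

Lemma big_Xset_sub (V : Type) (idx : V) (op : Monoid.com_law idx)
    (F : 'rV[R]_3 -> V) :
  \big[op/idx]_(u <- T) F u =
  op (\big[op/idx]_(m <- lidx M T) F (lpt m))
     (\big[op/idx]_(m <- ridx M T) F (rpt m)).
Proof.
apply: big_fsubset_imfsetU T_X; [exact: in2W lpt_inj | exact: in2W rpt_inj |].
by move=> a b /M_bnd a_le _; apply: lpt_neq_rpt.
Qed.

Lemma card_Xset_sub : #|` T| = (#|` lidx M T| + #|` ridx M T|)%N.
Proof. by rewrite !card_fset_sum1 big_Xset_sub. Qed.

Lemma sum_Xset_sub :
  \sum_(u <- T) u =
  vec3 (\sum_(m <- ridx M T) mcos m - \sum_(m <- lidx M T) mcos m)
       (\sum_(m <- lidx M T) mp m) (\sum_(m <- ridx M T) mp m).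
Proof.
rewrite big_Xset_sub /= !sum_vec3 !big1_eq -sumrN.
by apply/rowP => -[[|[|[|//]]] j]; rewrite !mxE /= ?addr0 ?add0r // addrC.
Qed.

Lemma inv_scale_le_enorm_sum_Xset_sub :
  #|` T| = (2 * K)%N -> (#|` lidx M T| = K -> \sum_(m <- lidx M T) m != 0) ->
  c^-1 <= enorm (\sum_(u <- T) u).
Proof.
rewrite card_Xset_sub sum_Xset_sub => AB_card sum_neq0.
have [A_bnd B_bnd] : {in lidx M T, forall m, `|m| <= t%:Z} /\
                     {in ridx M T, forall m, `|m| <= t%:Z}.
  by split=> m; rewrite !inE => /andP[/M_bnd].
case: (ltngtP #|` lidx M T| K) => A_card.
- apply: le_trans inv_scale_le1 (le_trans _ (normr_le_enorm _ 0)).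
  rewrite /vec3 mxE /= (le_trans _ (ler_norm _)) //.
  by rewrite (sum_mcos_gap B_bnd A_card) // addnC.
- apply: le_trans inv_scale_le1 (le_trans _ (normr_le_enorm _ 0)).
  rewrite /vec3 mxE /= distrC (le_trans _ (ler_norm _)) //.
  by rewrite (sum_mcos_gap A_bnd _ AB_card) //; lia.
apply: le_trans (normr_le_enorm _ 1); rewrite /vec3 mxE /=.
exact: inv_scale_le_norm_mprime_sum (sum_neq0 A_card).
Qed.

End SubsetOfX.

Lemma card_Xset (S : {fset int}) : {in S, forall m, `|m| <= t%:Z} ->
  #|` Xset R t K S| = (2 * #|` S|)%N.
Proof.
move=> S_bnd; rewrite (card_Xset_sub S_bnd (fsubset_refl _)).
by rewrite lidx_Xset ridx_Xset addnn mul2n.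
Qed.

Lemma sum_Xset (S : {fset int}) : {in S, forall m, `|m| <= t%:Z} ->
  \sum_(u <- Xset R t K S) u = vec3 0 (\sum_(m <- S) mp m) (\sum_(m <- S) mp m).
Proof.
move=> S_bnd; rewrite (sum_Xset_sub S_bnd (fsubset_refl _)).
by rewrite lidx_Xset ridx_Xset subrr.
Qed.

End Construction.

Arguments lidx : clear implicits.

Theorem lemma18 (R : realType) (t K : nat) (M : {fset int}) :
  (1 <= t)%N -> (2 <= K)%N ->
  (forall m, m \in M -> `|m| <= t%:Z) ->
  let X := Xset R t K M in
  let k := (2 * K)%N in
  ((exists S : {fset int}, S `<=` M /\ #|` S| = K /\ \sum_(m <- S) m = 0) ->
     exists T : {fset 'rV[R]_3}, T `<=` X /\ #|` T| = k /\ centroid T = 0)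
  /\
  (~ (exists S : {fset int}, S `<=` M /\ #|` S| = K /\ \sum_(m <- S) m = 0) ->
     forall T : {fset 'rV[R]_3}, T `<=` X -> #|` T| = k ->
       1 / (2 * t%:R * (K%:R * Num.sqrt K%:R)) <= enorm (centroid T)).
Proof.
move=> t_ge1 K_ge2 M_bnd X k; split.
  case=> S [S_M [S_card S_sum]].
  have S_bnd : {in S, forall m, `|m| <= t%:Z} by move=> m /(fsubsetP S_M)/M_bnd.
  exists (Xset R t K S); split; first exact: Xset_subset.
  rewrite card_Xset // S_card /centroid sum_Xset // mprime_sum S_sum mul0r.
  by rewrite vec3_0 scaler0.
move=> no_zero_sum T T_X T_card.
have K_gt0 : (0 < K)%N by apply: ltnW.
have -> : 1 / (2 * t%:R * (K%:R * Num.sqrt K%:R)) =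
    `|k%:R^-1| * (t%:R * Num.sqrt K%:R)^-1 :> R.
  rewrite ger0_norm ?invr_ge0 ?ler0n // natrM; field.
  by rewrite !gt_eqF ?sqrtr_gt0 ?ltr0n.
rewrite /centroid T_card enormZ; apply: ler_wpM2l; first exact: normr_ge0.
apply: (inv_scale_le_enorm_sum_Xset_sub t_ge1 K_ge2 M_bnd T_X T_card).
move=> A_card; apply/eqP => A_sum.
by apply: no_zero_sum; exists (lidx R t K M T); rewrite fset_sub.
Qed.
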